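(* Let $H=(\mathcal{V},\mathcal{I})$ be a proper interval hypergraph. Then $H$ is exactly hittable.
   Context: An interval hypergraph has vertex set $[n]=\{1,\dots,n\}$ and hyperedges that are nonempty sets of consecutive integers. It is proper if no interval is properly contained in another. It is exactly hittable if there is $S\subseteq\mathcal{V}$ with $|S\cap I|=1$ for every $I\in\mathcal{I}$. *)

(* Vertex set [n] = {1,...,n} is represented by 'I_n
   (vertex i+1 of the paper is the ordinal i); the shift preserves
   consecutiveness. *)
From mathcomp Require Import all_boot.
Set Implicit Arguments. Unset Strict Implicit. Unset Printing Implicit Defensive.

Definition is_interval (n : nat) (I : {set 'I_n}) : Prop :=
  I != set0 /\
  forall i j k : 'I_n, i \in I -> k \in I -> i <= j -> j <= k -> j \in I.

Definition interval_hypergraph (n : nat) (E : {set {set 'I_n}}) : Prop :=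
  forall I, I \in E -> is_interval I.

Definition proper_hypergraph (n : nat) (E : {set {set 'I_n}}) : Prop :=
  forall I J, I \in E -> J \in E -> ~~ (I \proper J).

Definition exactly_hittable (n : nat) (E : {set {set 'I_n}}) : Prop :=
  exists S : {set 'I_n}, forall I, I \in E -> #|S :&: I| = 1.

From mathcomp Require Import all_boot.
Set Implicit Arguments. Unset Strict Implicit. Unset Printing Implicit Defensive.

(* Greedy from left to right: take a vertex k whenever it is the right end of
   an edge that is still missed.  Then every chosen vertex x is the right end
   of an edge J meeting S only in x.  If two chosen vertices p < q lay in an
   edge I, the private edge J of q would avoid p, hence (being an interval
   ending at q) lie in I, and p would make the inclusion J \subset I proper. *)

Definition right_end (n : nat) (J : {set 'I_n}) (x : 'I_n) : bool :=
  (x \in J) && [forall y in J, y <= x].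

Lemma interval_sub_of_right_end n (I J : {set 'I_n}) (p q : 'I_n) :
  is_interval I -> is_interval J -> p \in I -> q \in I -> p < q ->
  p \notin J -> right_end J q -> J \subset I.
Proof.
move=> [_ convI] [_ convJ] pI qI ltpq pJ /andP[qJ /forall_inP leJq].
apply/subsetP => z zJ.
have ltpz : p < z.
  rewrite ltnNge; apply: contraNN pJ => lezp.
  by apply: (convJ z p q) => //; apply: ltnW.
by apply: (convI p z q) => //; [apply: ltnW | apply: leJq].
Qed.

Lemma setU1I_notin (T : finType) (a : T) (A B : {set T}) :
  a \notin B -> (a |: A) :&: B = A :&: B.
Proof.
move=> aB; apply/setP => x; rewrite !inE.
by case: eqP => [-> | _]; rewrite ?(negbTE aB) ?andbF.
Qed.

Section Greedy.

Variables (n : nat) (E : {set {set 'I_n}}).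
Hypothesis E_interval : interval_hypergraph E.

Definition private_right_ends (S : {set 'I_n}) : Prop :=
  forall x, x \in S -> exists2 J, J \in E & right_end J x /\ S :&: J = [set x].

Definition greedy_invariant (k : nat) (S : {set 'I_n}) : Prop :=
  [/\ forall x, x \in S -> x < k,
      forall J, J \in E -> (forall y, y \in J -> y < k) -> S :&: J != set0
    & private_right_ends S].

Lemma greedy_invariant0 : greedy_invariant 0 set0.
Proof.
split=> [x | J /E_interval[/set0Pn[y yJ] _] /(_ y yJ) // | x]; by rewrite inE.
Qed.

Lemma greedy_invariantS k S : k < n ->
  greedy_invariant k S -> exists S', greedy_invariant k.+1 S'.
Proof.
move=> ltkn [ltSk hitS privS]; pose o := Ordinal ltkn.
have hit_below J : J \in E -> (forall y, y \in J -> y < k.+1) -> o \notin J ->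
    S :&: J != set0.
  move=> EJ ltJ oJ; apply: hitS => // y yJ.
  rewrite ltn_neqAle -ltnS ltJ // andbT.
  by apply: contraNneq oJ => eyk; have <- : y = o by apply: val_inj.
have [/exists_inP[J0 EJ0 /andP[endJ0 /eqP SJ0]] | missed] :=
  boolP [exists J in E, right_end J o && (S :&: J == set0)].
- exists (o |: S); split.
  + by move=> x /setU1P[-> // | /ltSk/ltnW].
  + move=> J EJ ltJ; have [oJ | oJ] := boolP (o \in J).
      by apply/set0Pn; exists o; rewrite !inE eqxx oJ.
    by rewrite setU1I_notin // hit_below.
  + move=> x /setU1P[-> | Sx].
      exists J0 => //; split => //.
      by rewrite setIUl SJ0 setU0; apply/setIidPl; rewrite sub1set; case/andP: endJ0.
    have [J EJ [endJ SJ]] := privS x Sx.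
    exists J => //; split => //; rewrite setU1I_notin //.
    case/andP: endJ => _ /forall_inP leJx; apply/negP => /leJx.
    by rewrite leqNgt ltSk.
- exists S; split => // [x /ltSk/ltnW // | J EJ ltJ].
  have [oJ | ] := boolP (o \in J); last exact: hit_below.
  apply: contra missed => /eqP SJ; apply/exists_inP; exists J => //.
  by rewrite SJ eqxx andbT /right_end oJ; apply/forall_inP => y /ltJ.
Qed.

Lemma greedy_invariant_exists k : k <= n -> exists S, greedy_invariant k S.
Proof.
elim: k => [_ | k IHk ltkn]; first by exists set0; apply: greedy_invariant0.
have [S invS] := IHk (ltnW ltkn).
exact: greedy_invariantS invS.
Qed.

End Greedy.

Lemma private_right_ends_hit_once n (E : {set {set 'I_n}}) (S : {set 'I_n}) :
  interval_hypergraph E -> proper_hypergraph E -> private_right_ends E S ->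
  forall I, I \in E -> #|S :&: I| <= 1.
Proof.
move=> E_interval E_proper privS I EI; apply/card_le1_eqP.
suff no_lt p q : p \in S :&: I -> q \in S :&: I -> p < q -> False.
  move=> p q Pp Pq; case: (ltngtP p q) => [/(no_lt p q Pp Pq) [] | | /val_inj -> //].
  by move/(no_lt q p Pq Pp).
rewrite !inE => /andP[Sp Ip] /andP[Sq Iq] ltpq.
have [J EJ [endJ SJ]] := privS q Sq.
have pJ : p \notin J.
  apply: contraTN ltpq => pJ.
  have /set1P-> : p \in [set q] by rewrite -SJ inE Sp pJ.
  by rewrite ltnn.
have subJI := interval_sub_of_right_end (E_interval I EI) (E_interval J EJ)
  Ip Iq ltpq pJ endJ.
have := E_proper J I EJ EI; rewrite properE subJI /=.
by case/negP; apply/subsetPn; exists p.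
Qed.

Theorem lemma9 (n : nat) (E : {set {set 'I_n}}) :
  interval_hypergraph E -> proper_hypergraph E -> exactly_hittable E.
Proof.
move=> E_interval E_proper.
have [S [_ hitS privS]] := greedy_invariant_exists E_interval (leqnn n).
exists S => I EI; apply/eqP; rewrite eqn_leq.
rewrite (private_right_ends_hit_once E_interval E_proper privS EI) card_gt0.
exact: hitS I EI (fun y _ => ltn_ord y).
Qed.
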